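(* Let $G=SL(n,\mathbb{R})$, $u\in\mathcal{S}_n$, $x\in Y_{\ge u}$, and $A=u^{-1}[xu^{-1}]_+u$. Let $1\le i\le n$ and $1\le j\le n-1$. (1) If $i\le j$ and $u(j)\le u(i)\le u(j+1)$, then $(A^{-1})_{j,i}\,A_{i,j+1}\ge0$. (2) If $j<i$ and $u(j)\le u(i)\le u(j+1)$, then $(A^{-1})_{j,i}\,A_{i,j+1}\le0$. (3) Otherwise, $(A^{-1})_{j,i}\,A_{i,j+1}=0$.
   Context: $B_-,H,N,N_-$ denote the lower-triangular, diagonal, unipotent upper triangular and unipotent lower triangular matrices. Elements of $W=\mathcal{S}_n$ are bijections of $\{1,\dots,n\}$, represented by permutation matrices $u$ with $ue_b=e_{u(b)}$ (so $(u^{-1}Mu)_{i,k}=M_{u(i),u(k)}$; computations are done in $GL(n,\mathbb{R})$). For an invertible matrix $z$ with nonzero leading principal minors, $z=[z]_-[z]_0[z]_+$ is its Gaussian (LDU) decomposition with $[z]_+$ unipotent upper triangular. $Y$ is the set of unipotent upper triangular real matrices all of whose minors are nonnegative; $Y^\circ_w=Y\cap B_-wB_-$, and $Y_{\ge u}=\bigcup_{w\ge u}Y^\circ_w$ with respect to the Bruhat order ($u\le w$ iff $B_-uB_-\subset\overline{B_-wB_-}$). For $x\in Y_{\ge u}$ the matrix $xu^{-1}$ has a Gaussian decomposition, so $A$ is defined. *)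

From HB Require Import structures.
From mathcomp Require Import all_boot all_order all_algebra all_fingroup.
From mathcomp Require Import all_classical all_reals all_analysis.
Set Implicit Arguments. Unset Strict Implicit. Unset Printing Implicit Defensive.
Import Order.TTheory GRing.Theory Num.Theory.
Import numFieldNormedType.Exports.
Local Open Scope ring_scope.
Local Open Scope classical_set_scope.

Section Defs.
Variables (R : realType) (n : nat).

(* Permutation matrix of u, with u e_b = e_{u(b)}, i.e. entry (a,b) is [a = u b]. *)
Definition pmx (u : 'S_n) : 'M[R]_n := \matrix_(a, b) (a == u b)%:R.

Definition lower_tri (M : 'M[R]_n) : Prop := forall i j : 'I_n, (i < j)%N -> M i j = 0.
Definition upper_tri (M : 'M[R]_n) : Prop := forall i j : 'I_n, (j < i)%N -> M i j = 0.
Definition diag_mx_P (M : 'M[R]_n) : Prop := forall i j : 'I_n, i != j -> M i j = 0.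
Definition unipotent_diag (M : 'M[R]_n) : Prop := forall i : 'I_n, M i i = 1.

Definition Bminus (M : 'M[R]_n) : Prop := lower_tri M /\ M \in unitmx.
Definition Nplus (M : 'M[R]_n) : Prop := upper_tri M /\ unipotent_diag M.
Definition Nminus (M : 'M[R]_n) : Prop := lower_tri M /\ unipotent_diag M.
Definition Hdiag (M : 'M[R]_n) : Prop := diag_mx_P M /\ M \in unitmx.

Definition bruhat_cell (w : 'S_n) : set 'M[R]_n :=
  [set M | exists b1 b2, Bminus b1 /\ Bminus b2 /\ M = b1 *m pmx w *m b2].

Definition bruhat_le (u w : 'S_n) : Prop :=
  bruhat_cell u `<=` closure (bruhat_cell w).

Definition minor k (M : 'M[R]_n) (f g : 'I_k -> 'I_n) : R :=
  \det (\matrix_(a, b) M (f a) (g b)).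

Definition strict_incr k (f : 'I_k -> 'I_n) : Prop :=
  forall a b : 'I_k, (a < b)%N -> (f a < f b)%N.

Definition Y_tnn (x : 'M[R]_n) : Prop :=
  Nplus x /\ forall k (f g : 'I_k -> 'I_n), strict_incr f -> strict_incr g ->
    0 <= minor x f g.

Definition Y_ge (u : 'S_n) (x : 'M[R]_n) : Prop :=
  Y_tnn x /\ exists w : 'S_n, bruhat_le u w /\ bruhat_cell w x.

Definition gauss_plus (z U : 'M[R]_n) : Prop :=
  Nplus U /\ exists L D, Nminus L /\ Hdiag D /\ z = L *m D *m U.

End Defs.

From HB Require Import structures.
From mathcomp Require Import all_boot all_order all_algebra all_fingroup.
From mathcomp Require Import all_classical all_reals all_analysis.
From mathcomp Require Import ring.
Set Implicit Arguments. Unset Strict Implicit. Unset Printing Implicit Defensive.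
Import Order.TTheory GRing.Theory Num.Theory.
Import numFieldNormedType.Exports.
Local Open Scope ring_scope.

(* Put v = u^-1 and B = L D, so that x P_v = B U, and let a = u j, b = u i,
   c = u (j+1); then P = (U^-1)_{a,b} U_{b,c} and v c = v a + 1.
   A minor of x P_v is a minor of x with columns permuted by v, so it has the
   sign of the permutation sorting the v-images of its columns, i.e. the sign
   of their difference product.  On leading rows the minors of B U are those of
   U times a principal minor of B; that common factor of unknown sign cancels
   from the product of two of them.  Now U_{b,c} and -(U^-1)_{a,b} (Cramer) are
   leading minors of U that differ from a principal one, equal to 1, in a single
   column; this gives their signs as those of explicit products of factors
   (v c - v q)(v b - v q) and (v b - v q)(v a - v q).  As no integer lies
   strictly between v a and v c = v a + 1, in the product of the two every
   factor is positive except v a - v b = j - i. *)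

Lemma sumr_ord_narrow (V : nmodType) m n (hm : (m <= n)%N) (F : 'I_n -> V) :
  (forall t : 'I_n, (m <= t)%N -> F t = 0) ->
  \sum_(t < n) F t = \sum_(t < m) F (widen_ord hm t).
Proof.
move=> F0; rewrite (bigID (fun t : 'I_n => (t < m)%N)) /= [X in _ + X]big1 ?addr0.
  exact: big_ord_narrow.
by move=> t; rewrite -leqNgt; apply: F0.
Qed.

Lemma widen_ord_update_inj m n (hm : (m <= n)%N) (p : 'I_m) (c : 'I_n) :
  (m <= c)%N -> injective [eta widen_ord hm with p |-> c].
Proof.
move=> mc; have neq_c (t : 'I_m) : widen_ord hm t != c.
  by rewrite -val_eqE ltn_eqF // (leq_trans (ltn_ord t) mc).
move=> s t /=; case: (eqVneq s p) => [->|_]; case: (eqVneq t p) => [->|_] // e.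
- by have := neq_c t; rewrite -e eqxx.
- by have := neq_c s; rewrite e eqxx.
- exact/val_inj/(congr1 val e).
Qed.

Lemma perm_nat_neq n (v : 'S_n) (q s : 'I_n) : q != s -> (v q : nat) != v s.
Proof. by move=> qs; apply: contraNneq qs => /val_inj/perm_inj->. Qed.

Lemma ord_leq_neq_ltn n (a b : 'I_n) : (a <= b)%N -> a != b -> (a < b)%N.
Proof. by rewrite ltn_neqAle => -> ab; rewrite andbT; apply: ab. Qed.

Lemma adjacent_diff_mul_gt0 (R : realDomainType) (al be : nat) :
  be != al -> be != al.+1 -> 0 < ((al.+1)%:R - be%:R) * (al%:R - be%:R) :> R.
Proof.
move=> be_al be_al1; case: (ltngtP be al) => [be_lt|al_lt|eq_be]; last first.
- by rewrite eq_be eqxx in be_al.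
- rewrite -mulrNN mulr_gt0 // oppr_gt0 subr_lt0 ltr_nat // ltn_neqAle eq_sym be_al1.
  exact: al_lt.
by rewrite mulr_gt0 // subr_gt0 ltr_nat // ltnS ltnW.
Qed.

Lemma det_col_perm (R : comNzRingType) m (s : 'S_m) (M : 'M[R]_m) :
  \det (col_perm s M) = (-1) ^+ s * \det M.
Proof. by rewrite col_permE det_mulmx det_perm odd_permV mulrC. Qed.

Lemma det_upper_trig (R : comNzRingType) m (M : 'M[R]_m) :
  (forall r c : 'I_m, (c < r)%N -> M r c = 0) -> \det M = \prod_(r < m) M r r.
Proof.
move=> M0; rewrite -det_tr det_trig; last by apply/is_trig_mxP => r c rc; rewrite mxE M0.
by apply: eq_bigr => r _; rewrite mxE.
Qed.

Definition set_col (R : Type) m (M : 'M[R]_m) (a : 'I_m) (y : 'cV[R]_m) : 'M[R]_m :=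
  \matrix_(r, c) if c == a then y r 0 else M r c.

Lemma set_colE (R : Type) m (M : 'M[R]_m) a y r c :
  set_col M a y r c = if c == a then y r 0 else M r c.
Proof. exact: mxE. Qed.

Lemma det_set_col_mulmx (R : comNzRingType) m (M : 'M[R]_m) (a : 'I_m) (y : 'cV[R]_m) :
  \det (set_col M a (M *m y)) = \det M * y a 0.
Proof.
have -> : set_col M a (M *m y) = M *m set_col 1%:M a y.
  apply/matrixP => r c; rewrite !mxE; case: eqP => [->|/eqP ca].
    by apply: eq_bigr => t _; rewrite !mxE eqxx.
  rewrite (bigD1 c) //= big1 ?addr0 => [|t tc]; rewrite !mxE.
    by rewrite (negbTE ca) eqxx mulr1.
  by rewrite (negbTE ca) (negbTE tc) mulr0.
rewrite det_mulmx; congr (_ * _).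
rewrite (expand_det_row _ a) (bigD1 a) //= big1 ?addr0 => [|c ca].
  rewrite !mxE eqxx /cofactor -signr_odd oddD addbb mul1r.
  suff -> : row' a (col' a (set_col 1%:M a y)) = 1%:M by rewrite det1 mulr1.
  apply/matrixP => r c; rewrite !mxE eq_sym (negbTE (neq_lift a c)).
  by rewrite (inj_eq (@lift_inj _ a)).
by rewrite !mxE (negbTE ca) eq_sym (negbTE ca) mul0r.
Qed.

Lemma exists_sorting_perm m n (w : 'I_m -> 'I_n) : injective w ->
  exists s : 'S_m, strict_incr (w \o s).
Proof.
move=> w_inj; pose t := [tuple val (w k) | k < m].
have t_uniq : uniq t by rewrite map_inj_uniq ?enum_uniq // => a b /val_inj/w_inj.
have /tuple_permP[s t_sorted] : perm_eq (sort leq t) t by rewrite perm_sort.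
exists s => a b ab.
have sorted_lt : sorted ltn (sort leq t).
  by rewrite ltn_sorted_uniq_leq sort_uniq t_uniq sort_sorted //; apply: leq_total.
have := sorted_ltn_nth ltn_trans 0 sorted_lt a b.
rewrite !inE size_sort size_tuple !ltn_ord => /(_ isT isT ab).
rewrite t_sorted /= !(nth_map a) -?enumT ?size_enum_ord // !nth_ord_enum.
by rewrite !tnth_map !tnth_ord_tuple.
Qed.

Definition diff_prod (R : comNzRingType) m (a : 'I_m -> R) : R :=
  \prod_(p < m) \prod_(q < m | (p < q)%N) (a q - a p).

Lemma diff_prod_perm (R : comNzRingType) m (a : 'I_m -> R) (s : 'S_m) :
  diff_prod (a \o s) = (-1) ^+ s * diff_prod a.
Proof.
have diff_prodE (b : 'I_m -> R) : diff_prod b = \det (Vandermonde m (\row_q b q)).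
  by rewrite det_Vandermonde; apply: eq_bigr => p _; apply: eq_bigr => q _; rewrite !mxE.
by rewrite !diff_prodE -det_col_perm; congr (\det _); apply/matrixP => p q; rewrite !mxE.
Qed.

Lemma diff_prod_ge0 (R : numDomainType) m (a : 'I_m -> R) :
  (forall p q : 'I_m, (p < q)%N -> a p <= a q) -> 0 <= diff_prod a.
Proof.
move=> a_incr; apply: prodr_ge0 => p _; apply: prodr_ge0 => q pq.
by rewrite subr_ge0 a_incr.
Qed.

Lemma prod_pairs_through (R : comNzRingType) m (p : 'I_m) (G : 'I_m -> R) :
  \prod_(x < m) \prod_(y < m | (x < y)%N)
     (if x == p then G y else if y == p then G x else 1) = \prod_(q < m | q != p) G q.
Proof.
transitivity (\prod_(x < m) (if x == p then \prod_(y < m | (p < y)%N) G y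
                             else if (x < p)%N then G x else 1)).
  apply: eq_bigr => x _; case: (eqVneq x p) => [->|xp].
    by apply: eq_bigr => y _; rewrite ?eqxx.
  case: ifP => [xp_lt|xp_ge].
    by rewrite (bigD1 p) //= eqxx big1 ?mulr1 // => y /andP[_ /negbTE ->].
  by apply: big1 => y xy; case: eqP => // yp; rewrite -yp xy in xp_ge.
rewrite (bigD1 p) //= eqxx [RHS](bigID (fun q : 'I_m => (q < p)%N)) /= [RHS]mulrC.
congr (_ * _).
  by apply: eq_bigl => q; rewrite -leqNgt ltn_neqAle eq_sym; case: (q != p); rewrite ?andbF.
rewrite big_mkcond [RHS]big_mkcond; apply: eq_bigr => q _.
by case: (eqVneq q p) => [->|].
Qed.

(* The factors of the two products not involving [p] pair up into squares. *)
Lemma diff_prod_update (R : realDomainType) m (a a' : 'I_m -> R) (p : 'I_m) :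
  injective a -> (forall q, q != p -> a' q = a q) ->
  exists2 Q : R, 0 < Q & diff_prod a' * diff_prod a =
    Q * \prod_(q < m | q != p) ((a' p - a q) * (a p - a q)).
Proof.
move=> a_inj a'E.
exists (\prod_(x < m) \prod_(y < m | (x < y)%N)
          (if (x == p) || (y == p) then 1 else (a y - a x) ^+ 2)).
  apply: prodr_gt0 => x _; apply: prodr_gt0 => y xy; case: ifP => _; first exact: ltr01.
  rewrite exprn_even_gt0 // subr_eq0; apply/negP => /eqP/a_inj yx.
  by rewrite yx ltnn in xy.
rewrite -prod_pairs_through /diff_prod -!big_split; apply: eq_bigr => x _ /=.
rewrite -!big_split; apply: eq_bigr => y xy /=.
case: (eqVneq x p) => [exp|xp]; case: (eqVneq y p) => [eyp|yp] /=.
- by rewrite exp eyp ltnn in xy.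
- by rewrite exp (a'E y yp) mul1r -mulrNN !opprB.
- by rewrite eyp (a'E x xp) mul1r.
- by rewrite (a'E x xp) (a'E y yp) mulr1 expr2.
Qed.

Section Matrices.
Variables (R : realType) (n : nat).
Implicit Types (M B : 'M[R]_n) (w : 'S_n).

Lemma pmxE w : pmx R w = perm_mx w^-1.
Proof. by apply/matrixP => a b; rewrite !mxE (can2_eq (permKV w) (permK w)). Qed.

Lemma pmx_conjE w M r c : (pmx R w^-1 *m M *m pmx R w) r c = M (w r) (w c).
Proof. by rewrite !pmxE invgK -row_permE -col_permE !mxE. Qed.

Lemma invmx_pmx_conj w M : M \in unitmx ->
  invmx (pmx R w^-1 *m M *m pmx R w) = pmx R w^-1 *m invmx M *m pmx R w.
Proof.
move=> M_unit; rewrite !pmxE invgK.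
have perm_mxVK : perm_mx w^-1 *m perm_mx w = 1%:M :> 'M[R]_n.
  by rewrite -perm_mxM mulVg perm_mx1.
have perm_mxKV : perm_mx w *m perm_mx w^-1 = 1%:M :> 'M[R]_n.
  by rewrite -perm_mxM mulgV perm_mx1.
have inv_r : perm_mx w *m M *m perm_mx w^-1 *m (perm_mx w *m invmx M *m perm_mx w^-1) = 1%:M.
  rewrite -!mulmxA (mulmxA (perm_mx w^-1)) perm_mxVK mul1mx.
  by rewrite (mulmxA M) mulmxV // mul1mx perm_mxKV.
by rewrite -[LHS]mulmx1 -inv_r mulKmx // (mulmx1_unit inv_r).1.
Qed.

Lemma Bminus_mulmx_Nminus_Hdiag (L D : 'M[R]_n) : Nminus L -> Hdiag D -> Bminus (L *m D).
Proof.
move=> [L_low L_diag] [D_diag D_unit]; split.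
  move=> r c rc; rewrite mxE big1 // => t _.
  by have [->|/D_diag->] := eqVneq t c; rewrite ?mulr0 // L_low ?mul0r.
rewrite unitmx_mul D_unit andbT unitmxE det_trig ?big1 ?unitr1 //.
exact/is_trig_mxP.
Qed.

Lemma minor_col_perm M m (f g : 'I_m -> 'I_n) (s : 'S_m) :
  minor M f (g \o s) = (-1) ^+ s * minor M f g.
Proof. by rewrite /minor -det_col_perm; congr (\det _); apply/matrixP => a b; rewrite !mxE. Qed.

Lemma minor_mulmx_pmx M w m (f g : 'I_m -> 'I_n) :
  minor (M *m pmx R w) f g = minor M f (w \o g).
Proof.
congr (\det _); apply/matrixP => r s; rewrite !mxE.
rewrite (bigD1 (w (g s))) //= mxE eqxx mulr1 big1 ?addr0 // => t /negbTE tg.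
by rewrite mxE tg mulr0.
Qed.

(* Sorting the columns of the minor changes its sign and that of the difference
   product of the column indices alike. *)
Lemma Y_tnn_minor_diff_prod_ge0 x m (f g : 'I_m -> 'I_n) :
  Y_tnn x -> strict_incr f -> injective g ->
  0 <= minor x f g * diff_prod (fun k => (g k)%:R : R).
Proof.
move=> [_ x_tnn] f_incr /exists_sorting_perm[s gs_incr].
have gs_diff_ge0 : 0 <= diff_prod ((fun k => (g k)%:R : R) \o s).
  by apply: diff_prod_ge0 => p q pq; rewrite ler_nat ltnW ?gs_incr.
have := mulr_ge0 (x_tnn _ _ _ f_incr gs_incr) gs_diff_ge0.
by rewrite minor_col_perm diff_prod_perm mulrACA -expr2 sqrr_sign mul1r.
Qed.

Lemma minor_lower_mulmx_lead B M m (hm : (m <= n)%N) (g : 'I_m -> 'I_n) :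
  lower_tri B ->
  minor (B *m M) (widen_ord hm) g =
    (\prod_(r < m) B (widen_ord hm r) (widen_ord hm r)) * minor M (widen_ord hm) g.
Proof.
move=> B_low; rewrite /minor.
have -> : \matrix_(a, b) (B *m M) (widen_ord hm a) (g b) =
    \matrix_(a, b) B (widen_ord hm a) (widen_ord hm b) *m
    \matrix_(a, b) M (widen_ord hm a) (g b).
  apply/matrixP => a b; rewrite !mxE (sumr_ord_narrow hm) => [|t mt].
    by apply: eq_bigr => t _; rewrite !mxE.
  by rewrite B_low ?mul0r // (leq_trans (ltn_ord a) mt).
rewrite det_mulmx det_trig; last by apply/is_trig_mxP => r c rc; rewrite mxE B_low.
by congr (_ * _); apply: eq_bigr => r _; rewrite mxE.
Qed.

Lemma Bminus_diag_neq0 B (r : 'I_n) : Bminus B -> B r r != 0.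
Proof.
case=> B_low; rewrite unitmxE unitfE det_trig; last exact/is_trig_mxP.
by move/prodf_neq0; apply.
Qed.

End Matrices.

Section UnipotentUpper.
Variables (R : realType) (n : nat) (U : 'M[R]_n).
Hypotheses (U_upper : upper_tri U) (U_diag : unipotent_diag U).

Lemma det_unipotent_upper : \det U = 1.
Proof. by rewrite det_upper_trig // big1. Qed.

Lemma unitmx_unipotent_upper : U \in unitmx.
Proof. by rewrite unitmxE det_unipotent_upper unitr1. Qed.

Lemma invmx_unipotent_upper_lower (a b : 'I_n) : (b <= a)%N -> invmx U a b = (a == b)%:R.
Proof.
move=> ba; have := det_set_col_mulmx U a (col b (invmx U)).
rewrite det_unipotent_upper mul1r mxE => <-.
rewrite colE mulmxA mulmxV ?unitmx_unipotent_upper // mul1mx.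
rewrite det_upper_trig => [|r c cr].
  rewrite (bigD1 a) //= set_colE eqxx mxE andbT big1 ?mulr1 // => r ra.
  by rewrite set_colE (negbTE ra) U_diag.
rewrite set_colE; case: eqP => [ca|_]; last exact: U_upper.
by rewrite mxE andbT; case: eqP => // rb; rewrite rb ca ltnNge ba in cr.
Qed.

Lemma minor_unipotent_upper_lead m (hm : (m <= n)%N) :
  minor U (widen_ord hm) (widen_ord hm) = 1.
Proof.
rewrite /minor det_upper_trig => [|r c cr]; last by rewrite mxE U_upper.
by rewrite big1 // => r _; rewrite mxE U_diag.
Qed.

Lemma minor_unipotent_upper_set_last (b c : 'I_n) (hb : (b.+1 <= n)%N) : (b <= c)%N ->
  minor U (widen_ord hb) [eta widen_ord hb with ord_max |-> c] = U b c.
Proof.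
move=> bc; rewrite /minor det_upper_trig => [|r s sr]; rewrite ?mxE /=.
  rewrite (bigD1 ord_max) //= mxE eqxx big1 ?mulr1 => [|r /negbTE rm].
    by congr (U _ c); apply: val_inj.
  by rewrite mxE rm U_diag.
case: eqP => [sm|_]; last exact: U_upper.
by move: sr; rewrite sm /= ltnNge -ltnS ltn_ord.
Qed.

(* Cramer's rule: column [b] of the leading block is the combination of the
   columns [t < b] with coefficients [- invmx U t b]. *)
Lemma minor_unipotent_upper_set_inv (a b : 'I_n) (hb : (b <= n)%N) (ab : (a < b)%N) :
  minor U (widen_ord hb) [eta widen_ord hb with Ordinal ab |-> b] = - invmx U a b.
Proof.
pose w := widen_ord hb; pose Ub : 'M[R]_b := \matrix_(r, s) U (w r) (w s).
have wa : w (Ordinal ab) = a by apply: val_inj.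
have := det_set_col_mulmx Ub (Ordinal ab) (\col_t - invmx U (w t) b).
have det_Ub : \det Ub = 1 := minor_unipotent_upper_lead hb.
rewrite det_Ub mul1r mxE wa => <-; congr (\det _).
apply/matrixP => r s; rewrite !mxE /=; case: ifP => // _.
have colb_eq0 : \sum_t U (w r) t * invmx U t b = 0.
  have := mulmxV unitmx_unipotent_upper; move/matrixP/(_ (w r) b); rewrite !mxE => ->.
  by rewrite -val_eqE (ltn_eqF (ltn_ord r)).
rewrite (sumr_ord_narrow (ltn_ord b)) in colb_eq0; last first.
  move=> t bt; rewrite invmx_unipotent_upper_lower ?(ltnW bt) //.
  by rewrite -val_eqE gtn_eqF ?mulr0.
have wmax : widen_ord (ltn_ord b) ord_max = b by apply: val_inj.
have ww t : widen_ord (ltn_ord b) (widen_ord (leqnSn b) t) = w t by apply: val_inj.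
rewrite big_ord_recr /= wmax invmx_unipotent_upper_lower // eqxx mulr1 in colb_eq0.
move/eqP: colb_eq0; rewrite addrC addr_eq0 => /eqP ->.
by rewrite -sumrN; apply: eq_bigr => t _; rewrite !mxE mulrN ww.
Qed.

Lemma invmx_mul_unipotent_upper_eq0 (a b c : 'I_n) :
  ~~ (a <= b <= c)%N -> invmx U a b * U b c = 0.
Proof.
rewrite negb_and -!ltnNge => /orP[ba|cb]; last by rewrite U_upper ?mulr0.
by rewrite invmx_unipotent_upper_lower ?(ltnW ba) // -val_eqE gtn_eqF // mul0r.
Qed.

End UnipotentUpper.

Section LeadingMinorSigns.
Variables (R : realType) (n : nat) (B U : 'M[R]_n) (v : 'S_n).
Hypotheses (B_lower : Bminus B) (U_upper : upper_tri U) (U_diag : unipotent_diag U).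
Hypothesis BU_sign : forall m (f g : 'I_m -> 'I_n), strict_incr f -> injective g ->
  0 <= minor (B *m U) f g * diff_prod (fun k => (v (g k))%:R : R).

Local Notation vpos k := ((v k)%:R : R).

(* The leading minors of [B *m U] are those of [U] times the same nonzero
   principal minor of [B], whose square is positive. *)
Lemma minor_unipotent_upper_lead_pair_sign m (hm : (m <= n)%N) (g g' : 'I_m -> 'I_n) :
  injective g -> injective g' ->
  0 <= minor U (widen_ord hm) g * minor U (widen_ord hm) g' *
       (diff_prod (fun k => vpos (g k)) * diff_prod (fun k => vpos (g' k))).
Proof.
move=> g_inj g'_inj; have w_incr : strict_incr (widen_ord hm) by [].
have := mulr_ge0 (BU_sign w_incr g_inj) (BU_sign w_incr g'_inj).
rewrite !minor_lower_mulmx_lead; try exact: B_lower.1.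
set d := \prod_(r < m) _; have d_neq0 : d != 0.
  by apply/prodf_neq0 => r _; apply: Bminus_diag_neq0.
rewrite mulrACA [d * _ * (d * _)]mulrACA -expr2 -[d ^+ 2 * _ * _]mulrA pmulr_rge0 //.
by rewrite exprn_even_gt0 //= d_neq0.
Qed.

Lemma minor_unipotent_upper_update_sign m (hm : (m <= n)%N) (p : 'I_m) (c : 'I_n) :
  injective [eta widen_ord hm with p |-> c] ->
  0 <= minor U (widen_ord hm) [eta widen_ord hm with p |-> c] *
    \prod_(q < n | (q != widen_ord hm p) && (q < m)%N)
      ((vpos c - vpos q) * (vpos (widen_ord hm p) - vpos q)).
Proof.
move=> g_inj; have w_inj : injective (widen_ord hm).
  by move=> s t /(congr1 val) st; apply: val_inj.
have := minor_unipotent_upper_lead_pair_sign hm g_inj w_inj.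
rewrite minor_unipotent_upper_lead // mulr1.
have vw_inj : injective (fun k => vpos (widen_ord hm k)).
  by move=> s t /eqP; rewrite eqr_nat => /eqP/val_inj/perm_inj/w_inj.
have [Q Q_gt0 ->] := diff_prod_update (a' := fun k => vpos ([eta widen_ord hm with p |-> c] k))
  (p := p) vw_inj (fun q qp => congr1 (fun k => vpos k) (ifN_eq _ _ qp)).
rewrite mulrCA pmulr_rge0 //= eqxx big_ord_narrow_cond.
by rewrite (eq_bigl (fun q : 'I_m => q != p)) // => q; rewrite /= (inj_eq w_inj).
Qed.

Lemma unipotent_upper_entry_sign (b c : 'I_n) : (b < c)%N ->
  0 <= U b c * \prod_(q < n | (q < b)%N) ((vpos c - vpos q) * (vpos b - vpos q)).
Proof.
move=> bc; have hb : (b.+1 <= n)%N := ltn_ord b.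
have := minor_unipotent_upper_update_sign (widen_ord_update_inj (hm := hb) (p := ord_max) bc).
rewrite minor_unipotent_upper_set_last //; last exact: ltnW.
have -> : widen_ord hb ord_max = b by apply: val_inj.
by rewrite (eq_bigl (fun q : 'I_n => (q < b)%N)) // => q; rewrite /= ltnS [(q < b)%N]ltn_neqAle.
Qed.

Lemma invmx_unipotent_upper_sign (a b : 'I_n) : (a < b)%N ->
  0 <= - invmx U a b *
    \prod_(q < n | (q < b)%N && (q != a)) ((vpos b - vpos q) * (vpos a - vpos q)).
Proof.
move=> ab; have hb : (b <= n)%N := ltnW (ltn_ord b).
have := minor_unipotent_upper_update_sign
  (widen_ord_update_inj (hm := hb) (p := Ordinal ab) (leqnn b)).
rewrite minor_unipotent_upper_set_inv //.
have -> : widen_ord hb (Ordinal ab) = a by apply: val_inj.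
by rewrite (eq_bigl (fun q : 'I_n => (q < b)%N && (q != a))) // => q; rewrite andbC.
Qed.

Lemma vpos_adjacent_gt0 (a c q : 'I_n) : v c = (v a).+1 :> nat -> q != a -> q != c ->
  0 < (vpos c - vpos q) * (vpos a - vpos q).
Proof.
move=> vca qa qc; rewrite vca adjacent_diff_mul_gt0 ?perm_nat_neq //.
by rewrite -vca perm_nat_neq.
Qed.

(* [v c - v a = 1], so the factor [q = a] of the first product is [v b - v a];
   all other factors are positive. *)
Lemma invmx_mul_unipotent_upper_sign (a b c : 'I_n) : (a < b)%N -> (b < c)%N ->
  v c = (v a).+1 :> nat -> 0 <= invmx U a b * U b c * (vpos a - vpos b).
Proof.
move=> ab bc vca.
have := mulr_ge0 (invmx_unipotent_upper_sign ab) (unipotent_upper_entry_sign bc).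
rewrite (bigD1 a ab) /=.
have regroup (x y p1 f p2 : R) : - x * p1 * (y * (f * p2)) = (x * y * - f) * (p1 * p2).
  by ring.
have vca1 : vpos c - vpos a = 1 by rewrite vca mulrSr addrAC subrr add0r.
rewrite regroup -big_split /= vca1 mul1r opprB pmulr_lge0 //.
apply: prodr_gt0 => q /andP[qb qa].
have square_out (x y z : R) : x * y * (z * x) = x ^+ 2 * (z * y) by ring.
have qc : q != c by rewrite -val_eqE ltn_eqF // (ltn_trans qb bc).
have qb_neq : q != b by rewrite -val_eqE ltn_eqF.
rewrite square_out mulr_gt0 ?(vpos_adjacent_gt0 vca) //.
by rewrite exprn_even_gt0 //= subr_eq0 eqr_nat eq_sym perm_nat_neq.
Qed.

Lemma unipotent_upper_adjacent_ge0 (a c : 'I_n) : (a < c)%N -> v c = (v a).+1 :> nat ->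
  0 <= U a c.
Proof.
move=> ac vca; have := unipotent_upper_entry_sign ac; rewrite pmulr_lge0 //.
apply: prodr_gt0 => q qa; apply: vpos_adjacent_gt0 => //.
  by rewrite -val_eqE ltn_eqF.
by rewrite -val_eqE ltn_eqF // (ltn_trans qa ac).
Qed.

Lemma invmx_unipotent_upper_adjacent_le0 (a c : 'I_n) : (a < c)%N ->
  v c = (v a).+1 :> nat -> invmx U a c <= 0.
Proof.
move=> ac vca; have := invmx_unipotent_upper_sign ac; rewrite pmulr_lge0 ?oppr_ge0 //.
apply: prodr_gt0 => q /andP[qc qa]; apply: vpos_adjacent_gt0 => //.
by rewrite -val_eqE ltn_eqF.
Qed.

Lemma adjacent_ltn (a c : 'I_n) : (a <= c)%N -> v c = (v a).+1 :> nat -> (a < c)%N.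
Proof.
move=> ac vca; apply: ord_leq_neq_ltn ac _; apply/eqP => a_eq_c.
by move: vca; rewrite a_eq_c => /eqP; rewrite eqn_leq ltnn andbF.
Qed.

Lemma invmx_mul_unipotent_upper_ge0 (a b c : 'I_n) : (a <= b <= c)%N ->
  v c = (v a).+1 :> nat -> (v b <= v a)%N -> 0 <= invmx U a b * U b c.
Proof.
move=> /andP[ab bc] vca vba; have ac := leq_trans ab bc.
have [<-|a_neq_b] := eqVneq a b.
  by rewrite invmx_unipotent_upper_lower // eqxx mul1r unipotent_upper_adjacent_ge0
    ?adjacent_ltn.
have b_neq_c : b != c by apply/eqP => bc'; move: vba; rewrite bc' vca ltnn.
have := invmx_mul_unipotent_upper_sign (ord_leq_neq_ltn ab a_neq_b)
  (ord_leq_neq_ltn bc b_neq_c) vca.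
rewrite pmulr_lge0 // subr_gt0 ltr_nat ltn_neqAle vba andbT.
by rewrite perm_nat_neq // eq_sym.
Qed.

Lemma invmx_mul_unipotent_upper_le0 (a b c : 'I_n) : (a <= b <= c)%N ->
  v c = (v a).+1 :> nat -> (v a < v b)%N -> invmx U a b * U b c <= 0.
Proof.
move=> /andP[ab bc] vca vab; have ac := leq_trans ab bc.
have [->|b_neq_c] := eqVneq b c.
  by rewrite U_diag mulr1 invmx_unipotent_upper_adjacent_le0 ?adjacent_ltn.
have a_neq_b : a != b by apply/eqP => ab'; move: vab; rewrite ab' ltnn.
have := invmx_mul_unipotent_upper_sign (ord_leq_neq_ltn ab a_neq_b)
  (ord_leq_neq_ltn bc b_neq_c) vca.
by rewrite nmulr_lge0 // subr_lt0 ltr_nat.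
Qed.

End LeadingMinorSigns.

Theorem lemma6p6 (R : realType) (n : nat) (u : 'S_n) (x : 'M[R]_n)
  (U : 'M[R]_n) (i j : 'I_n) (hj : (j.+1 < n)%N) :
  Y_ge u x ->
  gauss_plus (x *m pmx R (u^-1)%g) U ->
  let A := pmx R (u^-1)%g *m U *m pmx R u in
  let j1 := Ordinal hj in
  let P := (invmx A) j i * A i j1 in
  (((i <= j)%N && (u j <= u i <= u j1)%N) -> 0 <= P) /\
  (((j < i)%N && (u j <= u i <= u j1)%N) -> P <= 0) /\
  (~~ (u j <= u i <= u j1)%N -> P = 0).
Proof.
move=> [x_tnn _] [[U_upper U_diag] [L [D [L_N [D_H LDU]]]]] A j1 P.
have U_unit := unitmx_unipotent_upper U_upper U_diag.
have PE : P = invmx U (u j) (u i) * U (u i) (u j1).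
  by rewrite /P /A invmx_pmx_conj // !pmx_conjE.
have BU_sign m (f g : 'I_m -> 'I_n) : strict_incr f -> injective g ->
    0 <= minor (L *m D *m U) f g * diff_prod (fun k => ((u^-1)%g (g k))%:R : R).
  move=> f_incr g_inj; rewrite -LDU minor_mulmx_pmx.
  by apply: Y_tnn_minor_diff_prod_ge0 => // s t /perm_inj/g_inj.
have uK k : (u^-1)%g (u k) = k by rewrite permK.
have vj1 : (u^-1)%g (u j1) = ((u^-1)%g (u j)).+1 :> nat by rewrite !uK.
have B_lower := Bminus_mulmx_Nminus_Hdiag L_N D_H.
rewrite PE; split; [|split] => [/andP[ij abc]|/andP[ji abc]|abc].
- by rewrite (invmx_mul_unipotent_upper_ge0 B_lower U_upper U_diag BU_sign) ?uK.
- by rewrite (invmx_mul_unipotent_upper_le0 B_lower U_upper U_diag BU_sign) ?uK.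
- exact: invmx_mul_unipotent_upper_eq0.
Qed.
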